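(* If a countably infinite oligomorphic structure $\mathbb{A}$ has the finite length property over a field $\mathbb{F}$, then every structure $\mathbb{B}$ that is first-order interpretable in $\mathbb{A}$ is oligomorphic and has the finite length property over $\mathbb{F}$.
   Context: Oligomorphic: the automorphism group has finitely many orbits on each finite power. An orbit-finite set over $\mathbb{A}$ is obtained from some $\mathbb{A}^d$ by restricting to an $\operatorname{Aut}(\mathbb{A})$-invariant subset and quotienting by an $\operatorname{Aut}(\mathbb{A})$-invariant equivalence relation, with the induced action. A $\sigma'$-structure $\mathbb{B}$ (relational vocabulary $\sigma'$) is first-order interpretable in $\mathbb{A}$ if it is isomorphic to a structure whose underlying set is an orbit-finite set $X$ over $\mathbb{A}$ and in which each $d$-ary $R\in\sigma'$ is interpreted by an $\operatorname{Aut}(\mathbb{A})$-invariant subset of $X^d$. Finite length property over $\mathbb{F}$ for a structure $\mathbb{M}$: for every orbit-finite set $Y$ over $\mathbb{M}$, there is a finite bound on the lengths $n$ of chains $V_0\subsetneq\dots\subsetneq V_n$ of $\operatorname{Aut}(\mathbb{M})$-invariant subspaces of $\operatorname{Lin}_{\mathbb{F}}Y$ (finite formal linear combinations of elements of $Y$). *)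

From HB Require Import structures.
From mathcomp Require Import all_boot all_algebra.
Set Implicit Arguments. Unset Strict Implicit. Unset Printing Implicit Defensive.
Import GRing.Theory.
Local Open Scope ring_scope.

Record structure := Structure {
  carrier :> Type;
  sym : Type;
  arity : sym -> nat;
  rel : forall s : sym, ('I_(arity s) -> carrier) -> Prop }.

Definition is_aut (M : structure) (g : M -> M) : Prop :=
  bijective g /\
  forall (s : sym M) (t : 'I_(arity s) -> M), rel t <-> rel (g \o t).

Definition countably_infinite (M : structure) : Prop :=
  exists f : nat -> M, bijective f.

Definition oligomorphic (M : structure) : Prop :=
  forall n : nat, exists (k : nat) (reps : 'I_k -> ('I_n -> M)),
    forall t : 'I_n -> M, exists (i : 'I_k) (g : M -> M),
      is_aut g /\ g \o reps i = t.

(* Data of an orbit-finite set over M: an Aut(M)-invariant subset S of M^d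
   and an Aut(M)-invariant equivalence relation E on S; the set is S/E. *)
Definition orbit_finite_data (M : structure) (d : nat)
  (S : ('I_d -> M) -> Prop) (E : ('I_d -> M) -> ('I_d -> M) -> Prop) : Prop :=
  (forall g, is_aut g -> forall t, S t <-> S (g \o t)) /\
  (forall g, is_aut g -> forall t u, E t u <-> E (g \o t) (g \o u)) /\
  (forall t u, E t u -> S t /\ S u) /\
  (forall t, S t -> E t t) /\
  (forall t u, E t u -> E u t) /\
  (forall t u w, E t u -> E u w -> E t w).

(* Elements of Lin_F (S/E): finitely supported F-valued functions on S/E,
   represented as functions on d-tuples that vanish outside S, are constant
   on E-classes, and are non-zero on only finitely many E-classes. *)
Definition in_Lin (F : fieldType) (M : structure) (d : nat)
  (S : ('I_d -> M) -> Prop) (E : ('I_d -> M) -> ('I_d -> M) -> Prop)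
  (v : ('I_d -> M) -> F) : Prop :=
  (forall t, v t != 0 -> S t) /\
  (forall t u, E t u -> v t = v u) /\
  (exists (k : nat) (reps : 'I_k -> ('I_d -> M)),
     forall t, v t != 0 -> exists i, E t (reps i)).

(* Aut(M)-invariant linear subspaces of Lin_F (S/E); g acts on a vector v
   by (g.v)([t]) = v([g^-1 t]). *)
Definition invariant_subspace (F : fieldType) (M : structure) (d : nat)
  (S : ('I_d -> M) -> Prop) (E : ('I_d -> M) -> ('I_d -> M) -> Prop)
  (V : (('I_d -> M) -> F) -> Prop) : Prop :=
  (forall v, V v -> in_Lin S E v) /\
  V (fun _ => 0) /\
  (forall v w, V v -> V w -> V (fun t => v t + w t)) /\
  (forall (a : F) v, V v -> V (fun t => a * v t)) /\
  (forall (g h : M -> M), is_aut g -> cancel g h -> cancel h g ->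
     forall v, V v -> V (fun t => v (h \o t))).

Definition invariant_chain (F : fieldType) (M : structure) (d : nat)
  (S : ('I_d -> M) -> Prop) (E : ('I_d -> M) -> ('I_d -> M) -> Prop)
  (n : nat) (V : nat -> (('I_d -> M) -> F) -> Prop) : Prop :=
  (forall i, (i <= n)%N -> invariant_subspace S E (V i)) /\
  (forall i, (i < n)%N ->
     (forall v, V i v -> V i.+1 v) /\ exists v, V i.+1 v /\ ~ V i v).

Definition finite_length (F : fieldType) (M : structure) : Prop :=
  forall (d : nat) (S : ('I_d -> M) -> Prop)
         (E : ('I_d -> M) -> ('I_d -> M) -> Prop),
    orbit_finite_data S E ->
    exists N : nat, forall n (V : nat -> (('I_d -> M) -> F) -> Prop),
      invariant_chain S E n V -> (n <= N)%N.

(* B is first-order interpretable in A: B is isomorphic (via h) to the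
   structure on the orbit-finite set X = S/E whose relations are
   Aut(A)-invariant subsets of X^k (the action of g on X being
   [t] |-> [g o t]). *)
Definition fo_interpretable (B A : structure) : Prop :=
  exists (d : nat) (S : ('I_d -> A) -> Prop)
         (E : ('I_d -> A) -> ('I_d -> A) -> Prop) (h : ('I_d -> A) -> B),
    orbit_finite_data S E /\
    (forall b : B, exists t, S t /\ h t = b) /\
    (forall t u, S t -> S u -> (h t = h u <-> E t u)) /\
    (forall (s : sym B) (ts : 'I_(arity s) -> ('I_d -> A)) (g : A -> A),
       is_aut g -> (forall i, S (ts i)) ->
       (rel (h \o ts) <-> rel (h \o (fun i => g \o ts i)))).

From Pilot Require Import Defs.
From mathcomp Require Import all_boot all_algebra.
From Stdlib Require Import Classical ClassicalEpsilon FunctionalExtensionality.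
Set Implicit Arguments. Unset Strict Implicit. Unset Printing Implicit Defensive.
Import GRing.Theory.
Local Open Scope ring_scope.

(* Write B = S/E with S a subset of A^d.  Every automorphism g of A induces an
   automorphism [t] |-> [g o t] of B, so Aut(A)-orbits on A^(n*d) project onto
   unions of Aut(B)-orbits on B^n, which gives oligomorphy of B.  Likewise an
   orbit-finite set S'/E' over B, with S' a subset of B^d', is coded by an
   orbit-finite set over A, with S' pulled back to A^(d'*d); composing with the
   decoding map embeds Lin(S'/E') into the coded space, sends Aut(B)-invariant
   subspaces to Aut(A)-invariant ones and preserves strict inclusions, so chains
   over B are no longer than the bound given for A. *)

Lemma is_aut_inv (M : structure) (g g' : M -> M) :
  is_aut g -> cancel g g' -> cancel g' g -> is_aut g'.
Proof.
move=> [_ relg] gK g'K; split; first by exists g.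
move=> s t; rewrite (relg s (g' \o t)).
by have -> : g \o (g' \o t) = t by apply: functional_extensionality => i /=; rewrite g'K.
Qed.

Section CurryTuple.
Variables (T : Type) (n d : nat).

Definition curry_tuple (w : 'I_#|{: 'I_n * 'I_d}| -> T) (j : 'I_n) : 'I_d -> T :=
  fun l => w (enum_rank (j, l)).

Definition uncurry_tuple (ts : 'I_n -> 'I_d -> T) : 'I_#|{: 'I_n * 'I_d}| -> T :=
  fun q => ts (enum_val q).1 (enum_val q).2.

Lemma uncurry_tupleK ts j : curry_tuple (uncurry_tuple ts) j = ts j.
Proof.
by apply: functional_extensionality => l; rewrite /curry_tuple /uncurry_tuple enum_rankK.
Qed.

End CurryTuple.

Section Interpretation.
Variables (A B : structure) (d : nat) (S : ('I_d -> A) -> Prop)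
  (E : ('I_d -> A) -> ('I_d -> A) -> Prop) (h : ('I_d -> A) -> B).
Hypothesis SE_data : orbit_finite_data S E.
Hypothesis h_onto : forall b : B, exists t, S t /\ h t = b.
Hypothesis h_eqE : forall t u, S t -> S u -> (h t = h u <-> E t u).
Hypothesis h_rel : forall (s : sym B) (ts : 'I_(arity s) -> ('I_d -> A)) (g : A -> A),
  is_aut g -> (forall i, S (ts i)) ->
  (Defs.rel (h \o ts) <-> Defs.rel (h \o (fun i => g \o ts i))).

Lemma S_aut g : is_aut g -> forall t, S t <-> S (g \o t).
Proof. by case: SE_data => SG _; exact: SG. Qed.

Lemma E_aut g : is_aut g -> forall t u, E t u <-> E (g \o t) (g \o u).
Proof. by case: SE_data => _ [EG _]; exact: EG. Qed.

Definition code (b : B) : 'I_d -> A :=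
  proj1_sig (constructive_indefinite_description _ (h_onto b)).

Lemma code_in b : S (code b).
Proof. by rewrite /code; case: constructive_indefinite_description => t []. Qed.

Lemma codeK b : h (code b) = b.
Proof. by rewrite /code; case: constructive_indefinite_description => t []. Qed.

Definition induce (g : A -> A) (b : B) : B := h (g \o code b).

Lemma induceE g t : is_aut g -> S t -> induce g (h t) = h (g \o t).
Proof.
move=> autg St; have Sc := code_in (h t).
have Ect : E (code (h t)) t by apply/h_eqE; rewrite ?codeK.
apply/h_eqE; rewrite -?(S_aut autg) //.
exact: (E_aut autg _ _).1 Ect.
Qed.

Lemma induce_can g g' :
  is_aut g -> cancel g g' -> cancel g' g -> cancel (induce g) (induce g').
Proof.
move=> autg gK g'K b; rewrite [induce g b]/induce induceE; last 2 first.
- exact: is_aut_inv g'K.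
- exact: (S_aut autg _).1 (code_in b).
have -> : g' \o (g \o code b) = code b.
  by apply: functional_extensionality => i /=; rewrite gK.
exact: codeK.
Qed.

Lemma is_aut_induce g : is_aut g -> is_aut (induce g).
Proof.
move=> autg; have [[g' gK g'K] _] := autg; split.
  exists (induce g'); first exact: induce_can.
  exact: induce_can (is_aut_inv autg gK g'K) g'K gK.
move=> s t; have -> : t = h \o (code \o t).
  by apply: functional_extensionality => i /=; rewrite codeK.
have -> : induce g \o (h \o (code \o t)) = h \o (fun i => g \o code (t i)).
  by apply: functional_extensionality => i /=; rewrite induceE //; apply: code_in.
by apply: h_rel => // i; apply: code_in.
Qed.

Definition coded n (w : 'I_#|{: 'I_n * 'I_d}| -> A) : Prop :=
  forall j, S (curry_tuple w j).

Lemma coded_aut n g (w : 'I_#|{: 'I_n * 'I_d}| -> A) : is_aut g -> coded w <-> coded (g \o w).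
Proof.
by move=> autg; split=> Sw j; [exact: (S_aut autg _).1 (Sw j) | exact: (S_aut autg _).2 (Sw j)].
Qed.

Lemma coded_code n (t : 'I_n -> B) : coded (uncurry_tuple (code \o t)).
Proof. by move=> j; rewrite uncurry_tupleK; apply: code_in. Qed.

Definition decode n (w : 'I_#|{: 'I_n * 'I_d}| -> A) : 'I_n -> B :=
  fun j => h (curry_tuple w j).

Lemma decode_code n (t : 'I_n -> B) : decode (uncurry_tuple (code \o t)) = t.
Proof. by apply: functional_extensionality => j; rewrite /decode uncurry_tupleK codeK. Qed.

Lemma decode_aut n g (w : 'I_#|{: 'I_n * 'I_d}| -> A) :
  is_aut g -> coded w -> decode (g \o w) = induce g \o decode w.
Proof. by move=> autg Sw; apply: functional_extensionality => j; rewrite /= induceE. Qed.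

Lemma oligomorphic_interp : oligomorphic A -> oligomorphic B.
Proof.
move=> oligA n; have [k [reps orbA]] := oligA #|{: 'I_n * 'I_d}|.
exists k, (fun i => decode (reps i)) => t.
have [i [g [autg greps]]] := orbA (uncurry_tuple (code \o t)).
have curry_reps j : g \o curry_tuple (reps i) j = code (t j).
  by have := uncurry_tupleK (code \o t) j; rewrite -greps.
have Creps : coded (reps i).
  by move=> j; apply/(S_aut autg); rewrite curry_reps; apply: code_in.
exists i, (induce g); split; first exact: is_aut_induce.
by rewrite -decode_aut // greps decode_code.
Qed.

Section LiftOrbitFinite.
Variables (F : fieldType) (d' : nat) (S' : ('I_d' -> B) -> Prop)
  (E' : ('I_d' -> B) -> ('I_d' -> B) -> Prop).
Hypothesis SE'_data : orbit_finite_data S' E'.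

Local Notation tuple := ('I_#|{: 'I_d' * 'I_d}| -> A).

Definition lift_S (w : tuple) : Prop := coded w /\ S' (decode w).

Definition lift_E (w w' : tuple) : Prop :=
  lift_S w /\ lift_S w' /\ E' (decode w) (decode w').

Lemma lift_S_aut g w : is_aut g -> lift_S w <-> lift_S (g \o w).
Proof.
move=> autg; case: SE'_data => S'G _; have S'ind := S'G _ (is_aut_induce autg).
rewrite /lift_S -coded_aut //; split=> -[Cw S'w]; split=> //.
  by rewrite decode_aut // -S'ind.
by move: S'w; rewrite decode_aut // -S'ind.
Qed.

Lemma lift_E_aut g w w' : is_aut g -> lift_E w w' <-> lift_E (g \o w) (g \o w').
Proof.
move=> autg; case: SE'_data => _ [E'G _]; have E'ind := E'G _ (is_aut_induce autg).
rewrite /lift_E -!lift_S_aut //; split=> -[Sw [Sw' E'ww']]; do 2!split => //.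
  by rewrite (decode_aut autg Sw.1) (decode_aut autg Sw'.1) -E'ind.
by move: E'ww'; rewrite (decode_aut autg Sw.1) (decode_aut autg Sw'.1) -E'ind.
Qed.

Lemma lift_data : orbit_finite_data lift_S lift_E.
Proof.
case: SE'_data => _ [_ [_ [E'refl [E'sym E'trans]]]].
split; first by move=> *; apply: lift_S_aut.
split; first by move=> *; apply: lift_E_aut.
split; first by move=> w w' [? [? _]].
split; first by move=> w [Cw S'w]; do 2!split => //; apply: E'refl.
split; first by move=> w w' [? [? ?]]; do 2!split => //; apply: E'sym.
by move=> w w' w'' [? [_ ?]] [_ [? ?]]; do 2!split => //; apply: E'trans; eassumption.
Qed.

(* Vanishing off the coded tuples keeps the lifted vectors inside Lin(lift_S/lift_E). *)
Definition lift_vec (v : ('I_d' -> B) -> F) (w : tuple) : F :=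
  if excluded_middle_informative (coded w) then v (decode w) else 0.

Lemma lift_vec_coded v w : coded w -> lift_vec v w = v (decode w).
Proof. by rewrite /lift_vec; case: excluded_middle_informative. Qed.

Lemma lift_vec_uncoded v w : ~ coded w -> lift_vec v w = 0.
Proof. by rewrite /lift_vec; case: excluded_middle_informative. Qed.

Lemma lift_vec_code v t : lift_vec v (uncurry_tuple (code \o t)) = v t.
Proof. by rewrite lift_vec_coded ?decode_code //; apply: coded_code. Qed.

Lemma lift_vec_inj : injective lift_vec.
Proof.
move=> v u vu; apply: functional_extensionality => t.
by rewrite -(lift_vec_code v) -(lift_vec_code u) vu.
Qed.

Lemma lift_vec0 : lift_vec (fun _ => 0) = (fun _ => 0).
Proof.
apply: functional_extensionality => w; have [Cw | notCw] := classic (coded w).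
  by rewrite lift_vec_coded.
by rewrite lift_vec_uncoded.
Qed.

Lemma lift_vecD v u : lift_vec (fun t => v t + u t) = (fun w => lift_vec v w + lift_vec u w).
Proof.
apply: functional_extensionality => w; have [Cw | notCw] := classic (coded w).
  by rewrite !lift_vec_coded.
by rewrite !lift_vec_uncoded ?addr0.
Qed.

Lemma lift_vecZ a v : lift_vec (fun t => a * v t) = (fun w => a * lift_vec v w).
Proof.
apply: functional_extensionality => w; have [Cw | notCw] := classic (coded w).
  by rewrite !lift_vec_coded.
by rewrite !lift_vec_uncoded ?mulr0.
Qed.

Lemma lift_vec_aut g g' v : is_aut g -> cancel g g' -> cancel g' g ->
  lift_vec (fun t => v (induce g' \o t)) = (fun w => lift_vec v (g' \o w)).
Proof.
move=> autg gK g'K; have autg' := is_aut_inv autg gK g'K.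
apply: functional_extensionality => w; have Cg' := coded_aut w autg'.
have [Cw | notCw] := classic (coded w).
  by rewrite !lift_vec_coded ?decode_aut //; apply/Cg'.
by rewrite !lift_vec_uncoded // -Cg'.
Qed.

Lemma lift_vec_in_Lin v : in_Lin S' E' v -> in_Lin lift_S lift_E (lift_vec v).
Proof.
case: SE'_data => _ [_ [E'S _]] [vS' [vE' [k [reps vfin]]]].
have coded_lift w : lift_vec v w != 0 -> coded w.
  by have [// | /lift_vec_uncoded ->] := classic (coded w); rewrite eqxx.
split.
  by move=> w /[dup] /coded_lift Cw; rewrite lift_vec_coded // => /vS'.
split.
  by move=> w w' [[Cw _] [[Cw' _] E'ww']]; rewrite !lift_vec_coded // (vE' _ _ E'ww').
exists k, (fun i => uncurry_tuple (code \o reps i)) => w.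
move=> /[dup] /coded_lift Cw; rewrite lift_vec_coded // => /[dup] /vS' S'w /vfin [i E'wi].
have [_ S'i] := E'S _ _ E'wi.
by exists i; rewrite /lift_E /lift_S decode_code; do !split => //; apply: coded_code.
Qed.

Definition lift_space (V : (('I_d' -> B) -> F) -> Prop) (x : tuple -> F) : Prop :=
  exists2 v, V v & x = lift_vec v.

Lemma lift_space_invariant V :
  invariant_subspace S' E' V -> invariant_subspace lift_S lift_E (lift_space V).
Proof.
move=> [VLin [V0 [VD [VZ VG]]]].
split; first by move=> _ [v Vv ->]; apply/lift_vec_in_Lin/VLin.
split; first by exists (fun _ => 0); rewrite ?lift_vec0.
split.
  by move=> _ _ [v Vv ->] [u Vu ->]; exists (fun t => v t + u t); [apply: VD | rewrite lift_vecD].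
split; first by move=> a _ [v Vv ->]; exists (fun t => a * v t); [apply: VZ | rewrite lift_vecZ].
move=> g g' autg gK g'K _ [v Vv ->]; exists (fun t => v (induce g' \o t)).
  have autg' := is_aut_inv autg gK g'K.
  exact: VG (is_aut_induce autg) (induce_can autg gK g'K) (induce_can autg' g'K gK) _ Vv.
by rewrite (lift_vec_aut v autg gK g'K).
Qed.

Lemma lift_chain n V : invariant_chain S' E' n V ->
  invariant_chain lift_S lift_E n (fun i => lift_space (V i)).
Proof.
move=> [Vinv Vstrict]; split; first by move=> i /Vinv /lift_space_invariant.
move=> i /Vstrict [Vsub [v [Vv notVv]]]; split.
  by move=> _ [u Vu ->]; exists u => //; apply: Vsub.
exists (lift_vec v); split; first by exists v.
by move=> [u Vu /lift_vec_inj vu]; apply: notVv; rewrite vu.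
Qed.

Lemma chain_bound_interp : finite_length F A ->
  exists N : nat, forall n (V : nat -> (('I_d' -> B) -> F) -> Prop),
    invariant_chain S' E' n V -> (n <= N)%N.
Proof.
move=> flA; have [N bound] := flA _ _ _ lift_data.
by exists N => n V /lift_chain; apply: bound.
Qed.

End LiftOrbitFinite.

End Interpretation.

Theorem mainTheorem17 (F : fieldType) (A : structure) :
  countably_infinite A -> oligomorphic A -> finite_length F A ->
  forall B : structure, fo_interpretable B A ->
    oligomorphic B /\ finite_length F B.
Proof.
move=> _ oligA flA B [d [S [E [h [SE_data [h_onto [h_eqE h_rel]]]]]]].
split; first exact: oligomorphic_interp SE_data h_onto h_eqE h_rel oligA.
move=> d' S' E' SE'_data.
exact: (chain_bound_interp SE_data h_onto h_eqE h_rel SE'_data flA).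
Qed.
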